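(* Let $\mu$ be a probability measure on $\mathbb{R}$, let $X_1,X_2,\dots$ be i.i.d. $2\times2$ random matrices whose entries are i.i.d. with law $\mu$, and $A_n=X_1X_2\cdots X_n$. Then for every $n\ge1$, $\Pr(A_n\text{ has all eigenvalues real})\ge\frac12$. *)

From HB Require Import structures.
From mathcomp Require Import all_boot all_order all_algebra.
From mathcomp Require Import all_classical all_reals all_analysis.
From mathcomp Require complex.
Import complex.ComplexField.

Set Implicit Arguments.
Unset Strict Implicit.
Unset Printing Implicit Defensive.

Import Order.TTheory GRing.Theory Num.Theory.
Local Open Scope classical_set_scope.
Local Open Scope ring_scope.

Definition all_eigenvalues_real (R : realType) (n : nat) (A : 'M[R]_n) : Prop :=
  forall z : complex.complex R,
    eigenvalue (map_mx (complex.real_complex R) A) z -> complex.Im z = 0.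

Definition mutually_independent d (T : measurableType d) (R : realType)
    (P : probability T R) (I : eqType) (X : I -> T -> R) : Prop :=
  forall (J : seq I) (B : I -> set R),
    uniq J -> (forall i, i \in J -> measurable (B i)) ->
    P (\bigcap_(i in [set i | i \in J]) (X i @^-1` B i)) =
      (\prod_(i <- J) P (X i @^-1` B i))%E.

Definition prod_mx (R : realType) (X : nat -> 'M[R]_2) (n : nat) : 'M[R]_2 :=
  \prod_(1 <= k < n.+1) X k.

(* A real 2x2 matrix M has real eigenvalues iff its discriminant
   disc M = (tr M)^2 - 4 det M is nonnegative.  Swapping the two columns of the
   last factor X_n does not change the joint law of the (iid) entries, and it
   replaces A_n by A_n J with det J = -1; hence disc A_n + disc (A_n J) =
   (tr A_n)^2 + (tr (A_n J))^2 >= 0.  So the two equiprobable events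
   {disc A_n >= 0} and {disc (A_n J) >= 0} cover the sample space, and each has
   probability at least 1/2. *)

From HB Require Import structures.
From mathcomp Require Import all_boot all_order all_algebra.
From mathcomp Require Import all_classical all_reals all_analysis.
From mathcomp Require complex.
From mathcomp Require Import perm ring lra measurable_realfun.
Import complex.ComplexField.

Set Implicit Arguments.
Unset Strict Implicit.
Unset Printing Implicit Defensive.
Import Order.TTheory GRing.Theory Num.Theory.
Local Open Scope classical_set_scope.
Local Open Scope ring_scope.

Lemma det_mx2 (R : comNzRingType) (A : 'M[R]_2) :
  \det A = A 0 0 * A 1 1 - A 0 1 * A 1 0.
Proof.
rewrite (expand_det_row _ 0) !big_ord_recl big_ord0 /cofactor !det_mx11 !mxE /=.
rewrite expr0 expr1 mul1r mulN1r addr0 mulrN.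
by congr (A _ _ * A _ _ - A _ _ * A _ _); apply/val_inj.
Qed.

Lemma mxtrace_mx2 (R : comNzRingType) (A : 'M[R]_2) : \tr A = A 0 0 + A 1 1.
Proof.
by rewrite /mxtrace !big_ord_recl big_ord0 addr0; congr (_ + A _ _); apply/val_inj.
Qed.

Lemma eigenvalue_det (F : fieldType) n (A : 'M[F]_n) a :
  eigenvalue A a = (\det (a%:M - A) == 0).
Proof.
apply/eigenvalueP/det0P=> [[v Av_av v_nz] | [v v_nz Av_av]]; exists v => //.
  by rewrite mulmxBr Av_av mul_mx_scalar subrr.
by apply/eqP; rewrite -mul_mx_scalar eq_sym -subr_eq0 -mulmxBr Av_av.
Qed.

Definition discr_mx (R : comNzRingType) (A : 'M[R]_2) : R :=
  \tr A ^+ 2 - 4%:R * \det A.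

Lemma discr_mxE (R : comNzRingType) (A : 'M[R]_2) :
  discr_mx A = (A 0 0 - A 1 1) ^+ 2 + 4%:R * (A 0 1 * A 1 0).
Proof. by rewrite /discr_mx mxtrace_mx2 det_mx2; ring. Qed.

(* An odd column permutation negates [\det], so the determinant terms cancel
   and only the squared traces remain. *)
Lemma discr_mx_col_perm_odd (R : realDomainType) (A : 'M[R]_2) (s : 'S_2) :
  s -> 0 <= discr_mx A + discr_mx (col_perm s A).
Proof.
move=> s_odd; have -> : discr_mx A + discr_mx (col_perm s A) =
    \tr A ^+ 2 + \tr (col_perm s A) ^+ 2.
  by rewrite /discr_mx col_permE det_mulmx det_perm odd_permV s_odd expr1; ring.
by rewrite addr_ge0 ?sqr_ge0.
Qed.

Lemma det_Complex_sub_map_mx (R : realType) (A : 'M[R]_2) (x y : R) :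
  \det ((complex.Complex x y)%:M - map_mx (complex.real_complex R) A) =
  complex.Complex ((x - A 0 0) * (x - A 1 1) - y ^+ 2 - A 0 1 * A 1 0)
                  (y * (2%:R * x - A 0 0 - A 1 1)).
Proof.
rewrite det_mx2 !mxE /= mulr1n mulr0n !sub0r /complex.real_complex_def.
by rewrite -[LHS]/(complex.Complex _ _); congr complex.Complex; ring.
Qed.

Lemma all_eigenvalues_real_discr (R : realType) (A : 'M[R]_2) :
  all_eigenvalues_real A <-> 0 <= discr_mx A.
Proof.
rewrite discr_mxE; split=> [real_eig | discr_ge0 [x y]]; last first.
  rewrite eigenvalue_det det_Complex_sub_map_mx => /eqP[re0 /eqP].
  rewrite mulf_eq0 => /orP[/eqP // | /eqP trace_eq] /=.
  suff : y ^+ 2 <= 0 by rewrite le_eqVlt ltNge sqr_ge0 orbF sqrf_eq0 => /eqP.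
  nra.
rewrite leNgt; apply/negP => discr_lt0.
set s := Num.sqrt (- ((A 0 0 - A 1 1) ^+ 2 + 4%:R * (A 0 1 * A 1 0))).
have s_gt0 : 0 < s by rewrite sqrtr_gt0 oppr_gt0.
have s2 : s ^+ 2 = - ((A 0 0 - A 1 1) ^+ 2 + 4%:R * (A 0 1 * A 1 0)).
  by rewrite sqr_sqrtr // oppr_ge0 ltW.
have /real_eig/= : eigenvalue (map_mx (complex.real_complex R) A)
    (complex.Complex ((A 0 0 + A 1 1) / 2%:R) (s / 2%:R)).
  rewrite eigenvalue_det det_Complex_sub_map_mx.
  apply/eqP; rewrite -[RHS]/(complex.Complex 0 0); congr complex.Complex.
    by rewrite expr_div_n s2; field.
  by field.
by move/eqP; rewrite mulf_eq0 invr_eq0 pnatr_eq0 orbF gt_eqF.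
Qed.

(* A copy of [I -> R] carrying a point, so that it can host a generated
   sigma-algebra. *)
Definition rvec (I : Type) (R : nmodType) := I -> R.
HB.instance Definition _ I R := Choice.on (rvec I R).
HB.instance Definition _ I R := isPointed.Build (rvec I R) (fun=> 0).

Section product_sigma_algebra.
Variables (R : realType) (I : finType).

Definition box (B : I -> set R) : set (rvec I R) := [set y | forall i, B i (y i)].

Definition boxes : set (set (rvec I R)) :=
  [set box B | B in [set B | forall i, measurable (B i)]].

Definition rvecB := g_sigma_algebraType boxes.

Lemma setI_closed_boxes : setI_closed boxes.
Proof.
move=> _ _ [B1 mB1 <-] [B2 mB2 <-]; exists (fun i => B1 i `&` B2 i).
  by move=> i; exact: measurableI.
rewrite /box; apply/seteqP; split=> y /=.
  by move=> yB; split=> i; case: (yB i).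
by move=> [yB1 yB2] i; split.
Qed.

Lemma boxesT : boxes setT.
Proof. by exists (fun=> setT) => //; apply/seteqP; split. Qed.

Lemma measurable_coord i : measurable_fun [set: rvecB] (fun y => y i).
Proof.
move=> _ A mA; rewrite setTI; apply: sub_sigma_algebra.
exists (fun j => if j == i then A else setT); first by move=> j; case: ifP.
apply/seteqP; split=> y /=; first by move=> /(_ i); rewrite eqxx.
by move=> Ay j; case: eqP => // ->.
Qed.

Section joint.
Variables (d : measure_display) (T : measurableType d).

Definition joint (Z : I -> T -> R) (w : T) : rvecB := fun i => Z i w.

Lemma measurable_joint (Z : I -> T -> R) :
  (forall i, measurable_fun [set: T] (Z i)) -> measurable_fun [set: T] (joint Z).
Proof.
move=> mZ; apply: (measurability (boxes : set (set rvecB))) => //.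
move=> _ [_ [B mB <-] <-]; rewrite setTI.
rewrite (_ : _ @^-1` _ = \bigcap_(i in [set: I]) (Z i @^-1` B i)).
  apply: fin_bigcap_measurable => [|i _]; first exact: finite_finset.
  by rewrite -(setTI (_ @^-1` _)); exact: mZ.
by rewrite /box; apply/seteqP; split=> w /= Bw i => [_|]; apply: Bw.
Qed.

Lemma measurable_joint_preimage (Z : I -> T -> R) (A : set rvecB) :
  (forall i, measurable_fun [set: T] (Z i)) -> measurable A ->
  measurable (joint Z @^-1` A).
Proof. by move=> /measurable_joint mZ mA; rewrite -(setTI (_ @^-1` _)); exact: mZ. Qed.

End joint.
End product_sigma_algebra.

Section iid.
Variables (R : realType) (d : measure_display) (T : measurableType d).
Variables (P : probability T R) (mu : probability R R).

Definition iid (I : eqType) (Z : I -> T -> R) : Prop :=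
  [/\ forall i, measurable_fun [set: T] (Z i), mutually_independent P Z &
      forall i B, measurable B -> P (Z i @^-1` B) = mu B].

Lemma iid_comp (I : eqType) (J : finType) (Z : I -> T -> R) (f : J -> I) :
  injective f -> iid Z -> iid (Z \o f).
Proof.
move=> f_inj [mZ indZ lawZ]; split=> [j | J' B uJ' mB | j B mB].
- exact: mZ.
- pose B' i := if [pick j | f j == i] is Some j then B j else setT.
  have B'f j : B' (f j) = B j.
    by rewrite /B'; case: pickP => [j' /eqP/f_inj -> // | /(_ j)]; rewrite eqxx.
  have mB' : forall i, i \in map f J' -> measurable (B' i).
    by move=> _ /mapP[j jJ ->]; rewrite B'f; exact: mB.
  have := indZ (map f J') B' _ mB'; rewrite map_inj_uniq // => /(_ uJ').
  have -> : \bigcap_(i in [set i | i \in map f J']) (Z i @^-1` B' i) =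
      \bigcap_(j in [set j | j \in J']) ((Z \o f) j @^-1` B j).
    apply/seteqP; split=> w /= Bw.
      by move=> j jJ; rewrite -B'f; apply: Bw; exact: map_f.
    by move=> _ /mapP[j jJ ->]; rewrite B'f; exact: Bw.
  by rewrite big_map; under eq_bigr do rewrite B'f.
- exact: lawZ.
Qed.

Lemma iid_joint_box (I : finType) (Z : I -> T -> R) (B : I -> set R) :
  iid Z -> (forall i, measurable (B i)) ->
  P (joint Z @^-1` box B) = (\prod_i mu (B i))%E.
Proof.
move=> [_ indZ lawZ] mB.
have := indZ (index_enum I) B (index_enum_uniq I) (fun i _ => mB i).
have -> : \bigcap_(i in [set i | i \in index_enum I]) (Z i @^-1` B i) =
    joint Z @^-1` box B.
  rewrite /box; apply/seteqP; split=> w /= Bw i => [|_]; last exact: Bw.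
  by apply: Bw; exact: mem_index_enum.
by move=> ->; apply: eq_bigr => i _; exact: lawZ.
Qed.

(* The joint law of an iid family is determined by the common law [mu]: both
   pushforwards agree on boxes, a generating pi-system. *)
Lemma iid_joint_law (I : finType) (Z Z' : I -> T -> R) (A : set (rvecB R I)) :
  iid Z -> iid Z' -> measurable A -> P (joint Z @^-1` A) = P (joint Z' @^-1` A).
Proof.
move=> iidZ iidZ' mA.
(* the pushforward measures below need [mZ] and [mZ'], found by [//] *)
have [/measurable_joint mZ _ _] := iidZ; have [/measurable_joint mZ' _ _] := iidZ'.
have cover : \bigcup_(k : nat) (fun=> [set: rvecB R I]) k = setT.
  by apply/seteqP; split=> // y _; exists 0%N.
apply: (measure_unique (@boxes R I : set (set (rvecB R I))) (fun=> setT) erefl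
  (@setI_closed_boxes R I) (fun=> @boxesT R I) cover
  (pushforward P (joint Z)) (pushforward P (joint Z'))) => //.
  move=> _ [B mB <-].
  exact: etrans (iid_joint_box iidZ mB) (esym (iid_joint_box iidZ' mB)).
move=> _; apply: le_lt_trans (ltey 1).
by apply: probability_le1; apply: measurable_joint_preimage; case: iidZ.
Qed.

End iid.

Lemma cover2_probability_ge_half d (T : measurableType d) (R : realType)
    (P : probability T R) (E E' : set T) :
  measurable E -> measurable E' -> E `|` E' = setT -> P E = P E' ->
  ((1 / 2 : R)%:E <= P E)%E.
Proof.
move=> mE mE' EE' PEE'.
have : (1 <= P E + P E')%E.
  by rewrite -(probability_setT P) -EE'; exact: measureU2.
rewrite -PEE'; move: (measure_ge0 P E) (probability_le1 P mE).
by case: (P E) => [r | |] //=; rewrite -EFinD !lee_fin => *; lra.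
Qed.

Section matrix_products.
Variables (R : realType) (d : measure_display) (T : measurableType d).

Lemma measurable_prod_mx_entries (I : Type) n (s : seq I) (F : I -> T -> 'M[R]_n.+1) :
  (forall k i j, measurable_fun [set: T] (fun w => F k w i j)) ->
  forall i j, measurable_fun [set: T] (fun w => (\prod_(k <- s) F k w) i j).
Proof.
move=> mF; elim: s => [|k s IH] i j.
  by under eq_fun do rewrite big_nil mxE; exact: measurable_cst.
under eq_fun do rewrite big_cons -mulmxE mxE.
by apply: measurable_sum => l; apply: measurable_funM.
Qed.

Lemma measurable_discr_mx (F : T -> 'M[R]_2) :
  (forall i j, measurable_fun [set: T] (fun w => F w i j)) ->
  measurable_fun [set: T] (fun w => discr_mx (F w)).
Proof.
move=> mF; under eq_fun do rewrite discr_mxE.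
apply: measurable_funD; first by apply/measurable_funX/measurable_funB.
by apply: measurable_funM; [exact: measurable_cst | exact: measurable_funM].
Qed.

End matrix_products.

Section products_of_random_matrices.
Variable R : realType.

Definition entry_index m := ('I_m.+1 * 'I_2 * 'I_2)%type.

Definition mx_of m (y : rvecB R (entry_index m)) (k : 'I_m.+1) : 'M[R]_2 :=
  \matrix_(i, j) y (k, i, j).

Definition mx_prod_of m (y : rvecB R (entry_index m)) : 'M[R]_2 :=
  \prod_(k < m.+1) mx_of y k.

Lemma measurable_discr_mx_prod_of_ge0 m :
  measurable [set y : rvecB R (entry_index m) | 0 <= discr_mx (mx_prod_of y)].
Proof.
have mdiscr : measurable_fun [set: rvecB R (entry_index m)]
    (fun y => discr_mx (mx_prod_of y)).
  apply: measurable_discr_mx; apply: measurable_prod_mx_entries => k i j.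
  by under eq_fun do rewrite mxE; exact: measurable_coord.
have := mdiscr measurableT _ (measurable_itv `[(0 : R), +oo[).
by rewrite setTI; congr measurable; apply/seteqP; split=> y; rewrite /= in_itv /= andbT.
Qed.

Definition swap_last_cols m (x : entry_index m) : entry_index m :=
  let: (k, i, j) := x in (k, i, if k == ord_max then tperm 0 1 j else j).

Lemma swap_last_colsK m : involutive (@swap_last_cols m).
Proof. by move=> [[k i] j] /=; case: eqP => //= _; rewrite tpermK. Qed.

Lemma mx_prod_of_swap_last_cols m (y : rvecB R (entry_index m)) :
  mx_prod_of (fun x => y (swap_last_cols x)) = col_perm (tperm 0 1) (mx_prod_of y).
Proof.
rewrite /mx_prod_of !big_ord_recr /=.
have -> : mx_of (fun x => y (swap_last_cols x)) ord_max =
    col_perm (tperm 0 1) (mx_of y ord_max).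
  by apply/matrixP => i j; rewrite !mxE /= eqxx.
rewrite !col_permE -!mulmxE mulmxA; congr (_ *m _ *m _).
apply: eq_bigr => k _; apply/matrixP => i j; rewrite !mxE /=.
by rewrite ifN // -val_eqE /= ltn_eqF.
Qed.

End products_of_random_matrices.

Definition mx_entries (R : realType) d (T : measurableType d)
    (X : nat -> T -> 'M[R]_2) m (x : entry_index m) (w : T) : R :=
  X x.1.1.+1 w x.1.2 x.2.
Arguments mx_entries {R d T} X m.

Lemma prod_mx_joint (R : realType) d (T : measurableType d)
    (X : nat -> T -> 'M[R]_2) m w :
  prod_mx (X^~ w) m.+1 = mx_prod_of (joint (mx_entries X m) w).
Proof.
rewrite /prod_mx big_add1 /= big_mkord; apply: eq_bigr => k _.
by apply/matrixP => i j; rewrite !mxE.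
Qed.

Theorem mainTheorem20 (R : realType) (mu : probability R R)
  (d : measure_display) (T : measurableType d) (P : probability T R)
  (X : nat -> T -> 'M[R]_2)
  (Xmeas : forall k (i j : 'I_2), measurable_fun setT (fun w => X k.+1 w i j))
  (Xlaw : forall k (i j : 'I_2) (B : set R), measurable B ->
     P ((fun w => X k.+1 w i j) @^-1` B) = mu B)
  (Xind : mutually_independent P
     (fun kij : nat * 'I_2 * 'I_2 => fun w => X kij.1.1.+1 w kij.1.2 kij.2))
  (n : nat) (hn : (1 <= n)%N) :
  ((1/2 : R)%:E <= P [set w | all_eigenvalues_real (prod_mx (X^~ w) n)])%E.
Proof.
case: n hn => // m _.
have iidX : iid P mu (fun kij : nat * 'I_2 * 'I_2 => fun w => X kij.1.1.+1 w kij.1.2 kij.2).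
  by split=> [[[k i] j] | | [[k i] j]]; [exact: Xmeas | exact: Xind | exact: Xlaw].
pose emb (x : entry_index m) := (val x.1.1, x.1.2, x.2).
have emb_inj : injective emb by move=> [[k i] j] [[k' i'] j'] [/val_inj -> -> ->].
have iidZ : iid P mu (mx_entries X m) := iid_comp emb_inj iidX.
have iidZ' : iid P mu (mx_entries X m \o @swap_last_cols m) :=
  iid_comp (inj_comp emb_inj (can_inj (@swap_last_colsK m))) iidX.
pose S := [set y : rvecB R (entry_index m) | 0 <= discr_mx (mx_prod_of y)].
have mS : measurable S := @measurable_discr_mx_prod_of_ge0 R m.
have -> : [set w | all_eigenvalues_real (prod_mx (X^~ w) m.+1)] =
    joint (mx_entries X m) @^-1` S.
  by apply/seteqP; split=> w /=; rewrite prod_mx_joint all_eigenvalues_real_discr.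
apply: cover2_probability_ge_half (iid_joint_law iidZ iidZ' mS).
- by apply: measurable_joint_preimage mS; case: iidZ.
- by apply: measurable_joint_preimage mS; case: iidZ'.
apply/seteqP; split=> // w _; rewrite /S /=.
have tperm_odd : odd_perm (tperm 0 1 : 'S_2) by rewrite odd_tperm.
have := discr_mx_col_perm_odd (mx_prod_of (joint (mx_entries X m) w)) tperm_odd.
rewrite -(mx_prod_of_swap_last_cols (joint (mx_entries X m) w)).
by case: (leP 0 (discr_mx _)) => [|discr_lt0 sum_ge0]; [left | right; lra].
Qed.
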